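(* Consider the slotted transmission system and transmission policy $P$ described in the context, with loss probability $p\in(0,1)$, feedback delay $d\ge0$ and threshold $\gamma>0$. Suppose that $|\hat{Q}^r_k-Q^r_k|\le\delta$ for all $k$ and some $\delta\ge0$, and that there is $\epsilon>0$ with $E[S_k\mid\hat{Q}^r_k]\ge\epsilon$ whenever $\hat{Q}^r_k\le\gamma$. Let $\hat{S}_k:=1-C_k$ (so $S_k\le\hat{S}_k$) and $\hat{s}_k:=\frac1k\sum_{i=1}^k\hat{S}_i$. Then, as $k\to\infty$, $$E[\hat{s}_k]\ge(1-p)-\frac{\tfrac12+\delta+(1+\delta)(1-p)}{\gamma}.$$
   Context: Time is slotted, slots $k=1,2,\dots$; each slot carries at most one packet transmission over a lossy path. Information packets arrive at the transmitter according to $A_k\in\{0,1\}$ and are held in a transmitter queue $Q^t_{k+1}=[Q^t_k+A_k-S_k]^+$, $Q^t_1=0$, where $[x]^+=\max\{x,0\}$. In slot $k$, $S_k\in\{0,1\}$ indicates that an information packet is sent and $C_k\in\{0,1\}$ indicates that a coded packet is sent ($S_k+C_k\le1$). Erasures: $X_k=1$ if the packet sent in slot $k$ is erased and $0$ otherwise; $\{X_k\}$ is i.i.d. with $\Pr(X_k=1)=p$, independent of the transmitter's decisions and queue state up to slot $k$. The virtual receiver queue evolves as $Q^r_{k+1}=[Q^r_k+S_kX_k-C_k(1-X_k)]^+$ (non-negative integer valued). Feedback reaches the transmitter with delay $d$ slots, so in slot $k$ the transmitter knows $Q^r_{k-d}$ (quantities with non-positive indices are given initial values). The estimator is $\hat{Q}^r_k=Q^r_{k-d}+\sum_{j=k-d}^{k-1}(S_jp-C_j(1-p))$.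 Transmission policy $P$ with parameter $\gamma$: $C_k\in\arg\min_{C\in\{0,1\}}(-\hat{Q}^r_k+\gamma)C$ and $S_k=\min\{Q^t_k+A_k,\,1-C_k\}$. Expectations are over the arrival and loss processes. *)

From HB Require Import structures.
From mathcomp Require Import all_boot all_order all_algebra.
From mathcomp Require Import all_classical all_reals all_analysis.
Set Implicit Arguments. Unset Strict Implicit. Unset Printing Implicit Defensive.
Import Order.TTheory GRing.Theory Num.Theory.
Local Open Scope ring_scope.

(* Pathwise (deterministic) description of the slotted system and of the
   transmission policy P.  Slots are k = 1,2,...; index 0 is a dummy slot
   where every quantity is 0 (initial values of non-positive indices are 0).
   A history [h : seq (bool*bool)] stores h`_j = (S_j, C_j). *)
Section Policy.
Variable R : realType.
Variables (p gamma : R) (d : nat) (a x : nat -> bool).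
(* a j = A_j (arrival in slot j), x j = X_j (erasure in slot j) *)

Definition Sof (h : seq (bool * bool)) (j : nat) : bool := (nth (false, false) h j).1.
Definition Cof (h : seq (bool * bool)) (j : nat) : bool := (nth (false, false) h j).2.

(* Q^t_1 = 0, Q^t_{k+1} = [Q^t_k + A_k - S_k]^+ (truncated nat subtraction) *)
Fixpoint Qt_of (h : seq (bool * bool)) (k : nat) : nat :=
  match k with
  | 0 => 0
  | k'.+1 => if k' is 0 then 0 else (Qt_of h k' + a k' - Sof h k')%N
  end.

(* Q^r_0 = Q^r_1 = 0, Q^r_{k+1} = [Q^r_k + S_k X_k - C_k (1 - X_k)]^+ *)
Fixpoint Qr_of (h : seq (bool * bool)) (k : nat) : nat :=
  match k with
  | 0 => 0
  | k'.+1 => if k' is 0 then 0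
             else (Qr_of h k' + (Sof h k' && x k') - (Cof h k' && ~~ x k'))%N
  end.

(* \hat Q^r_k = Q^r_{k-d} + sum_{j=k-d}^{k-1} (S_j p - C_j (1-p)),
   with all quantities of non-positive index equal to 0 *)
Definition Qhat_of (h : seq (bool * bool)) (k : nat) : R :=
  (Qr_of h (k - d))%:R +
  \sum_((k - d)%N <= j < k) ((Sof h j)%:R * p - (Cof h j)%:R * (1 - p)).

(* decision in slot k: C_k = 1 iff (-\hat Q^r_k + gamma) < 0 (ties -> C_k = 0),
   S_k = min(Q^t_k + A_k, 1 - C_k) *)
Definition dec (h : seq (bool * bool)) (k : nat) : bool * bool :=
  let c := gamma < Qhat_of h k in
  (~~ c && (0 < Qt_of h k + a k)%N, c).

(* traj k = [:: (S_0,C_0); (S_1,C_1); ...; (S_k,C_k)] *)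
Fixpoint traj (k : nat) : seq (bool * bool) :=
  match k with
  | 0 => [:: (false, false)]
  | k'.+1 => let h := traj k' in rcons h (dec h k'.+1)
  end.

Definition Sk (k : nat) : bool := Sof (traj k) k.
Definition Ck (k : nat) : bool := Cof (traj k) k.
Definition Qtk (k : nat) : nat := Qt_of (traj k) k.
Definition Qrk (k : nat) : nat := Qr_of (traj k) k.
Definition Qhatk (k : nat) : R := Qhat_of (traj k) k.

End Policy.

Definition S_rv (R : realType) (T : Type) (p gamma : R) (d : nat)
  (A X : nat -> T -> bool) (k : nat) (w : T) : bool :=
  Sk p gamma d (A ^~ w) (X ^~ w) k.
Definition C_rv (R : realType) (T : Type) (p gamma : R) (d : nat)
  (A X : nat -> T -> bool) (k : nat) (w : T) : bool :=
  Ck p gamma d (A ^~ w) (X ^~ w) k.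
Definition Qt_rv (R : realType) (T : Type) (p gamma : R) (d : nat)
  (A X : nat -> T -> bool) (k : nat) (w : T) : nat :=
  Qtk p gamma d (A ^~ w) (X ^~ w) k.
Definition Qr_rv (R : realType) (T : Type) (p gamma : R) (d : nat)
  (A X : nat -> T -> bool) (k : nat) (w : T) : nat :=
  Qrk p gamma d (A ^~ w) (X ^~ w) k.
Definition Qhat_rv (R : realType) (T : Type) (p gamma : R) (d : nat)
  (A X : nat -> T -> bool) (k : nat) (w : T) : R :=
  Qhatk p gamma d (A ^~ w) (X ^~ w) k.

From HB Require Import structures.
From mathcomp Require Import all_boot all_order all_algebra finmap.
From mathcomp Require Import all_classical all_reals all_analysis.
From mathcomp Require Import zify lra.
Set Implicit Arguments. Unset Strict Implicit. Unset Printing Implicit Defensive.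
Import Order.TTheory GRing.Theory Num.Theory.
Local Open Scope classical_set_scope.
Local Open Scope ring_scope.

(* Pathwise, a coded packet is sent only when Qhat^r_k > gamma, hence (if delta <= gamma)
   only when Q^r_k > 0, so every coded packet that gets through cancels an earlier erased
   information packet: Q^r_(K+1) + #{k <= K | C_k, ~X_k} = #{k <= K | S_k, X_k}.
   Taking expectations, and using that X_k is independent of the past with P(X_k) = p,
   gives (1 - p) sum_k P(C_k) <= p sum_k P(S_k) <= p sum_k (1 - P(C_k)), i.e.
   sum_(k <= K) P(C_k) <= p K.  Hence E[shat_K] >= 1 - p for every K, which is stronger
   than the claimed bound; when delta > gamma the claimed bound is negative anyway. *)

Definition causal {V : Type} n (F : (nat -> bool) -> (nat -> bool) -> V) :=
  forall a x a' x', (forall j, (j < n)%N -> a j = a' j /\ x j = x' j) -> F a x = F a' x'.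

Section Trajectory.
Variables (R : realType) (p gamma : R) (d : nat).

Local Notation traj := (traj p gamma d).
Local Notation nth0 := (nth (false, false)).

Lemma size_traj a x k : size (traj a x k) = k.+1.
Proof. by elim: k => //= k IH; rewrite size_rcons IH. Qed.

Lemma nth_traj a x k n j : (j <= k <= n)%N -> nth0 (traj a x n) j = nth0 (traj a x k) j.
Proof.
case/andP=> jk /subnK <-; elim: (n - k)%N => // m IH.
by rewrite addSn /= nth_rcons size_traj ltnS (leq_trans jk (leq_addl _ _)).
Qed.

Lemma Qr_ofSS x h m :
  Qr_of x h m.+2 = (Qr_of x h m.+1 + (Sof h m.+1 && x m.+1) - (Cof h m.+1 && ~~ x m.+1))%N.
Proof. by []. Qed.

Lemma Qt_ofSS a h m : Qt_of a h m.+2 = (Qt_of a h m.+1 + a m.+1 - Sof h m.+1)%N.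
Proof. by []. Qed.

Lemma eq_Qr_of x x' h h' m :
    (forall j, (j < m)%N -> x j = x' j /\ nth0 h j = nth0 h' j) ->
  Qr_of x h m = Qr_of x' h' m.
Proof.
elim: m => // -[_ _ //|m] IH H; rewrite !Qr_ofSS /Sof /Cof.
have [-> ->] := H m.+1 (ltnSn _).
by rewrite IH // => j /ltnW; apply: H.
Qed.

Lemma eq_Qt_of a a' h h' m :
    (forall j, (j < m)%N -> a j = a' j /\ nth0 h j = nth0 h' j) ->
  Qt_of a h m = Qt_of a' h' m.
Proof.
elim: m => // -[_ _ //|m] IH H; rewrite !Qt_ofSS /Sof.
have [-> ->] := H m.+1 (ltnSn _).
by rewrite IH // => j /ltnW; apply: H.
Qed.

Lemma eq_Qhat_of x x' h h' m :
    (forall j, (j < m)%N -> x j = x' j /\ nth0 h j = nth0 h' j) ->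
  Qhat_of p d x h m = Qhat_of p d x' h' m.
Proof.
move=> H; rewrite /Qhat_of (@eq_Qr_of x x' h h').
  congr (_ + _); rewrite !big_seq; apply: eq_bigr => j.
  by rewrite mem_index_iota /Sof /Cof => /andP[_ /H[_ ->]].
by move=> j hj; apply: H; apply: leq_trans hj (leq_subr _ _).
Qed.

Lemma eq_traj a x a' x' k :
    (forall j, (j <= k)%N -> a j = a' j /\ x j = x' j) ->
  traj a x k = traj a' x' k.
Proof.
elim: k => // k IH H /=; rewrite IH => [|j hj]; last by apply/H/(leq_trans hj).
rewrite /dec (@eq_Qhat_of x x' _ (traj a' x' k)) => [|j /ltnW /H[]//].
by rewrite (@eq_Qt_of a a' _ (traj a' x' k)) => [|j /ltnW /H[]//]; have [->] := H _ (leqnn _).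
Qed.

Lemma Sk_Ck a x k : Sk p gamma d a x k -> ~~ Ck p gamma d a x k.
Proof.
case: k => // k; rewrite /Ck /Sk /= /Cof /Sof nth_rcons size_traj ltnn eqxx /=.
by case/andP.
Qed.

Lemma Ck_Qhatk a x k : Ck p gamma d a x k.+1 = (gamma < Qhatk p gamma d a x k.+1).
Proof.
rewrite /Ck /Qhatk /= /Cof nth_rcons size_traj ltnn eqxx /=.
by rewrite (@eq_Qhat_of x x _ (traj a x k)) // => j jk; rewrite nth_rcons size_traj jk.
Qed.

Lemma QrkSS a x k :
  Qrk p gamma d a x k.+2 =
  (Qrk p gamma d a x k.+1 + (Sk p gamma d a x k.+1 && x k.+1)
     - (Ck p gamma d a x k.+1 && ~~ x k.+1))%N.
Proof.
rewrite /Qrk /Sk /Ck Qr_ofSS /Sof /Cof (@nth_traj _ _ k.+1 k.+2) ?leqnn ?leqnSn //.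
rewrite (@eq_Qr_of x x _ (traj a x k.+1)) // => j jk.
by split=> //; apply: nth_traj; rewrite (ltnW jk) leqnSn.
Qed.

Definition slot_state a x j : bool * bool * nat * nat :=
  (Sk p gamma d a x j, Ck p gamma d a x j, Qtk p gamma d a x j, Qrk p gamma d a x j).

Lemma causal_slot_state j : causal j.+1 (fun a x => slot_state a x j).
Proof.
move=> a x a' x' H; rewrite /slot_state /Sk /Ck /Qtk /Qrk (@eq_traj a x a' x' j) => [|i /H//].
rewrite (@eq_Qt_of a a' _ (traj a' x' j)) => [|i /ltnW/H[-> _]//].
by rewrite (@eq_Qr_of x x' _ (traj a' x' j)) => [|i /ltnW/H[_ ->]].
Qed.

Definition history k a x : seq (bool * bool * nat * nat) :=
  mkseq (fun i => slot_state a x i.+1) k.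

Lemma causal_history k : causal k.+1 (history k).
Proof.
move=> a x a' x' H; apply/eq_in_map => i; rewrite mem_iota => /andP[_ ik].
by apply: causal_slot_state => j ji; apply/H/(leq_trans ji).
Qed.

Lemma Qrk_balance a x :
    (forall k, Ck p gamma d a x k.+1 -> 0 < Qrk p gamma d a x k.+1)%N ->
  forall K, (Qrk p gamma d a x K.+1 + \sum_(1 <= i < K.+1) (Ck p gamma d a x i && ~~ x i) =
             \sum_(1 <= i < K.+1) (Sk p gamma d a x i && x i))%N.
Proof.
move=> CQr; elim=> [|K IH]; first by rewrite !big_geq.
rewrite big_nat_recr // [in RHS]big_nat_recr //= -IH QrkSS.
by case: (boolP (Ck _ _ _ _ _ _)) => [/CQr|] /=; case: (x K.+1) => /=; lia.
Qed.

Lemma Qrk_gt0_of_Ck a x delta :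
    delta <= gamma ->
    (forall k, (1 <= k)%N -> `|Qhatk p gamma d a x k - (Qrk p gamma d a x k)%:R| <= delta) ->
  forall k, Ck p gamma d a x k.+1 -> (0 < Qrk p gamma d a x k.+1)%N.
Proof.
move=> le_delta_gamma Hdelta k; rewrite Ck_Qhatk -(ltr_nat R) => lt_gamma_Qhat.
have /ler_normlP[_ +] := Hdelta k.+1 isT; lra.
Qed.

End Trajectory.

Definition upd (a : nat -> bool) n b : nat -> bool := fun j => if j == n then b else a j.

Lemma upd_id a n : upd a n (a n) = a.
Proof. by apply/funext => j; rewrite /upd; case: eqP => [->|]. Qed.

Lemma upd_cases V (F : (nat -> bool) -> (nat -> bool) -> V) a x n :
  F a x = if a n then (if x n then F (upd a n true) (upd x n true)
                       else F (upd a n true) (upd x n false))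
          else (if x n then F (upd a n false) (upd x n true)
                else F (upd a n false) (upd x n false)).
Proof. by rewrite -{1}(upd_id a n) -{1}(upd_id x n); case: (a n); case: (x n). Qed.

Lemma causal_upd V n (F : (nat -> bool) -> (nat -> bool) -> V) b c :
  causal n.+1 F -> causal n (fun a x => F (upd a n b) (upd x n c)).
Proof.
move=> HF a x a' x' H; apply: HF => j; rewrite ltnS leq_eqVlt /upd.
by case: eqP => // _ /H.
Qed.

Lemma causal_finite_range (V : choiceType) n (F : (nat -> bool) -> (nat -> bool) -> V) :
  causal n F -> exists L : {fset V}, forall a x, F a x \in L.
Proof.
elim: n F => [|n IH] F HF.
  by exists [fset F xpred0 xpred0]%fset => a x; rewrite inE (HF a x xpred0 xpred0).
have [L11 H11] := IH _ (causal_upd true true HF).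
have [L10 H10] := IH _ (causal_upd true false HF).
have [L01 H01] := IH _ (causal_upd false true HF).
have [L00 H00] := IH _ (causal_upd false false HF).
exists (L11 `|` L10 `|` L01 `|` L00)%fset => a x.
rewrite (upd_cases F a x n) !inE.
by case: (a n); case: (x n); rewrite ?H11 ?H10 ?H01 ?H00 ?orbT.
Qed.

Lemma measure_partition (R : realType) d (T : measurableType d)
    (mu : {measure set T -> \bar R}) (V : choiceType) (Phi : T -> V) (L : {fset V}) D :
    (forall v, measurable [set w | Phi w = v]) -> (forall w, Phi w \in L) -> measurable D ->
  mu D = (\sum_(v <- L) mu (D `&` [set w | Phi w = v]))%E.
Proof.
move=> mPhi PhiL mD; rewrite -measure_fbigsetU.
- congr (mu _); rewrite -bigcup_fset; apply/seteqP; split=> [w Dw|w [v _ []//]].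
  by exists (Phi w); [apply: PhiL|split].
- by move=> v _; apply: measurableI.
- by move=> u v _ _ [w [[_ <-] [_ ->]]].
Qed.

Section CausalEvents.
Variables (dT : measure_display) (T : measurableType dT) (A X : nat -> T -> bool).
Hypotheses (mA : forall k, measurable [set w | A k w]) (mX : forall k, measurable [set w | X k w]).

Lemma measurable_if (b e f : T -> bool) :
  measurable [set w | b w] -> measurable [set w | e w] -> measurable [set w | f w] ->
  measurable [set w | if b w then e w else f w].
Proof.
move=> mb me mf.
have -> : [set w | if b w then e w else f w] =
          ([set w | b w] `&` [set w | e w]) `|` (~` [set w | b w] `&` [set w | f w]).
  by apply/seteqP; split=> w /=; case: (b w) => /=; [left|right|case=> -[]|case=> -[]].
by apply: measurableU; apply: measurableI => //; apply: measurableC.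
Qed.

Lemma measurable_causal n (Q : (nat -> bool) -> (nat -> bool) -> bool) :
  causal n Q -> measurable [set w | Q (A ^~ w) (X ^~ w)].
Proof.
elim: n Q => [|n IH] Q HQ.
  have -> : [set w | Q (A ^~ w) (X ^~ w)] = [set _ | Q xpred0 xpred0].
    by apply/seteqP; split=> w; rewrite /= (HQ _ _ xpred0 xpred0).
  case: (Q _ _).
  - by rewrite (_ : [set _ | true] = setT) //; apply/seteqP; split.
  - by rewrite (_ : [set _ | false] = set0) //; apply/seteqP; split.
pose Qbc b c w := Q (upd (A ^~ w) n b) (upd (X ^~ w) n c).
have -> : [set w | Q (A ^~ w) (X ^~ w)] =
    [set w | if A n w then (if X n w then Qbc true true w else Qbc true false w)
             else (if X n w then Qbc false true w else Qbc false false w)].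
  by apply/seteqP; split=> w; rewrite /= (upd_cases Q _ _ n).
have mQbc b c : measurable [set w | Qbc b c w] := IH _ (causal_upd b c HQ).
by apply: measurable_if => //; apply: measurable_if => //; apply: mQbc.
Qed.

End CausalEvents.

Section IndicatorSums.
Variables (R : realType) (dT : measure_display) (T : measurableType dT).
Variable mu : {finite_measure set T -> \bar R}.

Lemma natr_indicE (b : T -> bool) w : (b w)%:R = \1_[set w | b w] w :> R.
Proof. by rewrite indicE; case bw: (b w); [rewrite mem_set|rewrite memNset //= bw]. Qed.

Lemma measurable_fun_natr (b : T -> bool) :
  measurable [set w | b w] -> measurable_fun setT (fun w => (b w)%:R : R).
Proof.
by move=> mb; under eq_fun => w do rewrite natr_indicE; apply: measurable_realfun.measurable_indic.
Qed.

Lemma measurable_fun_sum_indic (I : Type) (s : seq I) (c : I -> R) (b : I -> T -> bool) :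
  (forall i, measurable [set w | b i w]) ->
  measurable_fun setT (fun w => \sum_(i <- s) c i * (b i w)%:R).
Proof.
move=> mb; apply: measurable_sum => i.
by apply: measurable_realfun.measurable_funM => //; apply: measurable_fun_natr.
Qed.

Lemma integral_sum_indic (I : Type) (s : seq I) (c : I -> R) (b : I -> T -> bool) :
  (forall i, 0 <= c i) -> (forall i, measurable [set w | b i w]) ->
  (\int[mu]_w ((\sum_(i <- s) c i * (b i w)%:R)%:E) =
   (\sum_(i <- s) c i * fine (mu [set w | b i w]))%:E)%E.
Proof.
move=> c0 mb; under eq_integral => w _ do rewrite -sumEFin.
rewrite ge0_integral_sum //; last first.
- by move=> i w _; rewrite lee_fin mulr_ge0.
- move=> i; apply/measurable_realfun.measurable_EFinP.
  by apply: measurable_realfun.measurable_funM => //; apply: measurable_fun_natr.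
rewrite -sumEFin; apply: eq_bigr => i _.
under eq_integral => w _ do rewrite natr_indicE EFinM.
rewrite ge0_integralZl_EFin //; last first.
  exact/measurable_realfun.measurable_EFinP/measurable_realfun.measurable_indic.
by rewrite integral_indic // setIT EFinM fineK // fin_num_measure.
Qed.

End IndicatorSums.

Section Policy.
Variables (R : realType) (dT : measure_display) (T : measurableType dT).
Variables (P : probability T R) (A X : nat -> T -> bool) (p gamma : R) (d : nat).
Hypotheses (mA : forall k, measurable [set w | A k w]) (mX : forall k, measurable [set w | X k w]).
Hypothesis erasure_indep : forall (k : nat) (sv cv : nat -> bool) (qt qr : nat -> nat), (1 <= k)%N ->
  let B := [set w | forall j, (1 <= j <= k)%N ->
              [/\ S_rv p gamma d A X j w = sv j, C_rv p gamma d A X j w = cv j,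
                  Qt_rv p gamma d A X j w = qt j & Qr_rv p gamma d A X j w = qr j]] in
  P ([set w | X k w] `&` B) = (p%:E * P B)%E.

Local Notation Srv := (S_rv p gamma d A X).
Local Notation Crv := (C_rv p gamma d A X).
Local Notation hist k w := (history p gamma d k (A ^~ w) (X ^~ w)).

Lemma measurable_slot i (f : bool -> bool -> bool -> bool) :
  measurable [set w | f (Srv i w) (Crv i w) (X i w)].
Proof.
apply: (measurable_causal mA mX (n := i.+1)
  (Q := fun a x => f (Sk p gamma d a x i) (Ck p gamma d a x i) (x i))).
move=> a x a' x' H; have [_ ->] := H i (ltnSn i).
by have [-> ->] := causal_slot_state p gamma d H.
Qed.

Lemma measurable_history_eq k v : measurable [set w | hist k w = v].
Proof.
rewrite (_ : [set w | _] = [set w | history p gamma d k (A ^~ w) (X ^~ w) == v]).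
  apply: (measurable_causal mA mX (n := k.+1) (Q := fun a x => history p gamma d k a x == v)).
  by move=> a x a' x' /(causal_history p gamma d) ->.
by apply/seteqP; split=> w /eqP.
Qed.

Lemma erasure_indep_history_eq k v : (1 <= k)%N ->
  P ([set w | X k w] `&` [set w | hist k w = v]) = (p%:E * P [set w | hist k w = v])%E.
Proof.
move=> k1; have [szv|szv] := eqVneq (size v) k; last first.
  rewrite (_ : [set w | hist k w = v] = set0) ?setI0 ?measure0 ?mule0 //.
  by apply/seteqP; split=> w //= hv; move: szv; rewrite -hv size_mkseq eqxx.
pose vj j := nth (false, false, 0%N, 0%N) v j.-1.
have -> : [set w | hist k w = v] =
    [set w | forall j, (1 <= j <= k)%N ->
       [/\ Srv j w = (vj j).1.1.1, Crv j w = (vj j).1.1.2,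
           Qt_rv p gamma d A X j w = (vj j).1.2 & Qr_rv p gamma d A X j w = (vj j).2]].
  apply/seteqP; split=> w /=.
  - by move=> hv j /andP[j1 jk]; rewrite /vj -hv nth_mkseq ?prednK.
  - move=> H; apply: (@eq_from_nth _ (false, false, 0%N, 0%N)); first by rewrite size_mkseq szv.
    move=> i; rewrite size_mkseq => ik; rewrite nth_mkseq //.
    have [] := H i.+1 ik; rewrite /S_rv /C_rv /Qt_rv /Qr_rv /vj /= /slot_state => -> -> -> ->.
    by case: (nth _ v i) => [[[]]].
exact: erasure_indep.
Qed.

Lemma erasure_indep_history k (f : seq (bool * bool * nat * nat) -> bool) : (1 <= k)%N ->
  P ([set w | X k w] `&` [set w | f (hist k w)]) = (p%:E * P [set w | f (hist k w)])%E.
Proof.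
move=> k1; have [L histL] := causal_finite_range (causal_history p gamma d (k := k)).
have mf : measurable [set w | f (hist k w)].
  apply: (measurable_causal mA mX (n := k.+1) (Q := fun a x => f (history p gamma d k a x))).
  by move=> a x a' x' /(causal_history p gamma d) ->.
rewrite !(measure_partition P (measurable_history_eq k) (fun w => histL _ _)) //;
  last exact: measurableI.
rewrite ge0_sume_distrr => [|v _]; last exact: measure_ge0.
apply: eq_bigr => v _; rewrite -setIA.
have -> : [set w | f (hist k w)] `&` [set w | hist k w = v] =
          if f v then [set w | hist k w = v] else set0.
  apply/seteqP; case: ifP => fv; split=> w //=; first by case.
    by move=> hv; rewrite hv.
  by case=> + hv; rewrite hv fv.
by case: (f v); [exact: erasure_indep_history_eq|rewrite setI0 !measure0 mule0].
Qed.

Lemma erasure_indep_slot i (f : bool -> bool -> bool) : (1 <= i)%N ->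
  P ([set w | X i w] `&` [set w | f (Srv i w) (Crv i w)]) =
  (p%:E * P [set w | f (Srv i w) (Crv i w)])%E.
Proof.
case: i => // i _.
pose g v := let s := nth (false, false, 0%N, 0%N) v i in f s.1.1.1 s.1.1.2.
have -> : [set w | f (Srv i.+1 w) (Crv i.+1 w)] = [set w | g (hist i.+1 w)].
  by apply/seteqP; split=> w; rewrite /g /= nth_mkseq.
exact: erasure_indep_history.
Qed.

Local Notation pr E := (fine (P E)).

Lemma EFin_pr E : measurable E -> P E = (pr E)%:E.
Proof. by move=> mE; rewrite fineK // fin_num_measure. Qed.

Lemma pr_coded_delivered i : (1 <= i)%N ->
  pr [set w | Crv i w && ~~ X i w] = (1 - p) * pr [set w | Crv i w].
Proof.
move=> i1; have mC := measurable_slot i (fun _ c _ => c).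
have mCX := measurable_slot i (fun _ c x => c && ~~ x).
have : P [set w | Crv i w] =
       (P ([set w | X i w] `&` [set w | Crv i w]) + P [set w | Crv i w && ~~ X i w])%E.
  rewrite -measureU //; last 2 first.
  - exact: measurableI.
  - by apply/seteqP; split=> w //= [[-> _] /andP[]].
  congr (P _); apply/seteqP; split=> w /=; last by case=> [[]|/andP[]].
  by case: (X i w) => Cw; [left|right; rewrite Cw].
rewrite (erasure_indep_slot (fun _ c => c) i1) (EFin_pr mC) (EFin_pr mCX) -EFinM -EFinD.
by case; lra.
Qed.

Lemma pr_info_erased i : (1 <= i)%N ->
  pr [set w | Srv i w && X i w] = p * pr [set w | Srv i w].
Proof.
move=> i1; rewrite (_ : [set w | _ && _] = [set w | X i w] `&` [set w | Srv i w]).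
  by rewrite (erasure_indep_slot (fun s _ => s) i1) (EFin_pr (measurable_slot i (fun s _ _ => s))).
by apply/seteqP; split=> w /=; [case/andP|case=> -> ->].
Qed.

Lemma pr_info_le_not_coded i : pr [set w | Srv i w] <= 1 - pr [set w | Crv i w].
Proof.
have mS := measurable_slot i (fun s _ _ => s).
have mC := measurable_slot i (fun _ c _ => c).
rewrite -lee_fin EFinB -(EFin_pr mS) -(EFin_pr mC) -probability_setC //.
by apply: le_measure; rewrite ?inE //; [apply: measurableC|move=> w /Sk_Ck /negP].
Qed.

Variable delta : R.
Hypothesis le_delta_gamma : delta <= gamma.
Hypothesis Qhat_close : forall k w, (1 <= k)%N ->
  `|Qhat_rv p gamma d A X k w - (Qr_rv p gamma d A X k w)%:R| <= delta.

Lemma sum_pr_delivered_le_erased K :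
  \sum_(1 <= i < K.+1) pr [set w | Crv i w && ~~ X i w] <=
  \sum_(1 <= i < K.+1) pr [set w | Srv i w && X i w].
Proof.
have sum_prE (b : nat -> T -> bool) : (forall i, measurable [set w | b i w]) ->
    ((\sum_(1 <= i < K.+1) pr [set w | b i w])%:E =
     \int[P]_w ((\sum_(1 <= i < K.+1) 1 * (b i w)%:R)%:E))%E.
  by move=> mb; rewrite integral_sum_indic //; congr _%:E; apply: eq_bigr => i _; rewrite mul1r.
have mCX i := measurable_slot i (fun _ c x => c && ~~ x).
have mSX i := measurable_slot i (fun s _ x => s && x).
rewrite -lee_fin (sum_prE _ mCX) (sum_prE _ mSX).
apply: ge0_le_integral => //.
- by move=> w _; rewrite lee_fin sumr_ge0 // => i _; rewrite mul1r.
- exact/measurable_realfun.measurable_EFinP/measurable_fun_sum_indic.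
- exact/measurable_realfun.measurable_EFinP/measurable_fun_sum_indic.
move=> w _; rewrite lee_fin; under eq_bigr do rewrite mul1r.
under [X in _ <= X]eq_bigr do rewrite mul1r.
rewrite -!natr_sum ler_nat.
by rewrite -(Qrk_balance (Qrk_gt0_of_Ck le_delta_gamma (fun k => @Qhat_close k w)) K) leq_addl.
Qed.

Hypothesis p_ge0 : 0 <= p.

Lemma sum_pr_coded_le K : \sum_(1 <= i < K.+1) pr [set w | Crv i w] <= p * K%:R.
Proof.
have := sum_pr_delivered_le_erased K.
rewrite (eq_big_nat _ _ (F2 := fun i => (1 - p) * pr [set w | Crv i w])); last first.
  by move=> i /andP[i1 _]; rewrite pr_coded_delivered.
have erased_le : \sum_(1 <= i < K.+1) pr [set w | Srv i w && X i w] <=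
                 p * (K%:R - \sum_(1 <= i < K.+1) pr [set w | Crv i w]).
  have -> : K%:R = \sum_(1 <= i < K.+1) (1 : R) by rewrite sumr_const_nat subn1.
  rewrite -sumrB mulr_sumr; apply: ler_sum_nat => i /andP[i1 _].
  by rewrite pr_info_erased //; apply: ler_wpM2l => //; apply: pr_info_le_not_coded.
move/le_trans/(_ erased_le); rewrite -mulr_sumr; lra.
Qed.

Lemma expectation_shat_ge K :
  ((1 - p)%:E <=
   \int[P]_w (((K.+1%:R)^-1 * \sum_(1 <= i < K.+2) ((~~ Crv i w)%:R : R))%:E))%E.
Proof.
under eq_integral => w _ do rewrite mulr_sumr.
rewrite integral_sum_indic => [|_|i]; last 2 first.
- by rewrite invr_ge0.
- exact: (measurable_slot i (fun _ c _ => ~~ c)).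
have notC i : pr [set w | ~~ Crv i w] = 1 - pr [set w | Crv i w].
  have mC := measurable_slot i (fun _ c _ => c).
  rewrite (_ : [set w | ~~ _] = ~` [set w | Crv i w]); last first.
    by apply/seteqP; split=> w /= /negP.
  by rewrite probability_setC // (EFin_pr mC) -EFinB.
rewrite lee_fin -mulr_sumr (eq_bigr _ (fun i _ => notC i)) sumrB sumr_const_nat subn1 /=.
have := sum_pr_coded_le K.+1; set c := \sum_(_ <= _ < _) _ => le_c.
have K0 : 0 < K.+1%:R :> R by rewrite ltr0n.
rewrite mulrC ler_pdivlMr //; lra.
Qed.

End Policy.

Lemma limn_einf_ge (R : realType) (u : (\bar R)^nat) (l : \bar R) N :
  (forall n, (N <= n)%N -> (l <= u n)%E) -> (l <= limn_einf u)%E.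
Proof.
move=> ul; rewrite limn_einf_lim (cvg_lim _ (cvg_einfs_sup (u := u))) //.
apply: le_trans (ereal_sup_ubound _); last by exists N.
by apply/ereal_infP => _ [n /= Nn <-]; apply: ul.
Qed.

Theorem theorem2 (R : realType) (dT : measure_display) (T : measurableType dT)
  (P : probability T R) (A X : nat -> T -> bool)
  (p : R) (d : nat) (gamma delta eps : R) :
  0 < p < 1 -> 0 < gamma -> 0 <= delta -> 0 < eps ->
  (* arrivals and erasures are random variables *)
  (forall k, measurable [set w | A k w]) ->
  (forall k, measurable [set w | X k w]) ->
  (* {X_k} i.i.d. with Pr(X_k = 1) = p *)
  (forall (k : nat) (xv : nat -> bool), (1 <= k)%N ->
     let B := [set w | forall j, (1 <= j < k)%N -> X j w = xv j] in
     P ([set w | X k w] `&` B) = (p%:E * P B)%E) ->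
  (* X_k independent of the decisions and queue states up to slot k *)
  (forall (k : nat) (sv cv : nat -> bool) (qt qr : nat -> nat), (1 <= k)%N ->
     let B := [set w | forall j, (1 <= j <= k)%N ->
                 [/\ S_rv p gamma d A X j w = sv j, C_rv p gamma d A X j w = cv j,
                     Qt_rv p gamma d A X j w = qt j & Qr_rv p gamma d A X j w = qr j]] in
     P ([set w | X k w] `&` B) = (p%:E * P B)%E) ->
  (* |hat Q^r_k - Q^r_k| <= delta for all k *)
  (forall k w, (1 <= k)%N ->
     `|Qhat_rv p gamma d A X k w - (Qr_rv p gamma d A X k w)%:R| <= delta) ->
  (* E[S_k | hat Q^r_k] >= eps on the event {hat Q^r_k <= gamma} *)
  (forall k (B : set R), (1 <= k)%N -> measurable B -> B `<=` `]-oo, gamma] ->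
     (eps%:E * P (Qhat_rv p gamma d A X k @^-1` B) <=
      \int[P]_(w in Qhat_rv p gamma d A X k @^-1` B)
          ((S_rv p gamma d A X k w)%:R)%:E)%E) ->
  (* liminf_k E[hat s_k] >= (1-p) - (1/2 + delta + (1+delta)(1-p))/gamma *)
  (((1 - p) - (2^-1 + delta + (1 + delta) * (1 - p)) / gamma)%:E <=
   limn_einf (fun k : nat =>
     \int[P]_w (((k%:R)^-1 * \sum_(1 <= i < k.+1)
                    ((~~ C_rv p gamma d A X i w)%:R : R))%:E)))%E.
Proof.
move=> /andP[p0 p1] gamma0 delta0 _ mA mX _ erasure_indep Qhat_close _.
set N := 2^-1 + delta + (1 + delta) * (1 - p).
have N_gt_delta : delta < N.
  have : 0 <= (1 + delta) * (1 - p) by apply: mulr_ge0; lra.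
  by rewrite /N; lra.
apply: (limn_einf_ge (N := 1)) => -[//|K] _.
have [le_dg|lt_gd] := leP delta gamma.
  apply: le_trans (expectation_shat_ge mA mX erasure_indep le_dg Qhat_close (ltW p0) K).
  by rewrite lee_fin gerBl // divr_ge0 // ltW // (le_lt_trans delta0).
apply: le_trans (integral_ge0 _ _) => [|w _]; last first.
  by rewrite lee_fin mulr_ge0 // sumr_ge0.
have : 1 <= N / gamma by rewrite ler_pdivlMr // mul1r ltW // (lt_trans lt_gd).
by rewrite lee_fin; lra.
Qed.
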